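(* Let $h\ge2$ be an integer and $a,b,c,d\in\{1,\dots,h-1\}$ integers, and let $Q=\operatorname{conv}\{(a,0),(0,b),(h,h-c),(h-d,h)\}$. Then $\operatorname{ls}_\square(Q)=h$. Moreover, $Q$ is minimal if and only if $$\min\{a,b\}+\min\{c,d\}>h\quad\text{or}\quad \max\{a,c\}+\max\{b,d\}<h.$$ Furthermore, $Q$ cannot satisfy both of these inequalities, and if $Q$ satisfies one of them, then $Q$ is lattice-equivalent to a quadrilateral of the same form (with parameters in $\{1,\dots,h-1\}$) that satisfies the other.
   Context: A lattice polygon is a convex polygon (possibly degenerate) all of whose vertices lie in $\mathbb Z^2$. An affine unimodular transformation is $x\mapsto Ax+v$ with $A\in\mathbb Z^{2\times2}$, $\det A=\pm1$, $v\in\mathbb Z^2$; two sets are lattice-equivalent if one is the image of the other under such a map. With $\square=[0,1]^2$, $\operatorname{ls}_\square(P)$ is the smallest $l\ge0$ such that $\varphi(P)\subseteq l\square$ for some affine unimodular $\varphi$. A lattice polygon $P$ with $\operatorname{ls}_\square(P)=h$ is minimal if no lattice polygon properly contained in $P$ has $\operatorname{ls}_\square$ equal to $h$. *)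

From Stdlib Require Import Reals ZArith List.
Open Scope R_scope.

Definition pt := (R * R)%type.
Definition pset := pt -> Prop.

Definition lat (v : Z * Z) : pt := (IZR (fst v), IZR (snd v)).

Fixpoint rsum (f : nat -> R) (n : nat) : R :=
  match n with O => 0 | S k => rsum f k + f k end.

Definition conv (vs : list (Z * Z)) : pset := fun p =>
  exists w : nat -> R,
    (forall i, (i < length vs)%nat -> 0 <= w i) /\
    rsum w (length vs) = 1 /\
    fst p = rsum (fun i => w i * fst (lat (nth i vs (0%Z, 0%Z)))) (length vs) /\
    snd p = rsum (fun i => w i * snd (lat (nth i vs (0%Z, 0%Z)))) (length vs).

(* A lattice polygon: convex hull of a nonempty finite set of lattice points
   (possibly degenerate). *)
Definition lattice_polygon (P : pset) : Prop :=
  exists vs : list (Z * Z), vs <> nil /\ (forall p, P p <-> conv vs p).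

Record aff := Aff { m11 : Z; m12 : Z; m21 : Z; m22 : Z; t1 : Z; t2 : Z }.

Definition unimodular (f : aff) : Prop :=
  (m11 f * m22 f - m12 f * m21 f = 1)%Z \/ (m11 f * m22 f - m12 f * m21 f = -1)%Z.

Definition aff_apply (f : aff) (p : pt) : pt :=
  (IZR (m11 f) * fst p + IZR (m12 f) * snd p + IZR (t1 f),
   IZR (m21 f) * fst p + IZR (m22 f) * snd p + IZR (t2 f)).

Definition image (f : aff) (P : pset) : pset :=
  fun q => exists p, P p /\ q = aff_apply f p.

Definition subset (P P' : pset) : Prop := forall p, P p -> P' p.

Definition proper_subset (P P' : pset) : Prop :=
  subset P P' /\ exists p, P' p /\ ~ P p.

Definition lsquare (l : R) : pset :=
  fun q => 0 <= fst q <= l /\ 0 <= snd q <= l.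

Definition fits (P : pset) (l : R) : Prop :=
  exists f, unimodular f /\ subset (image f P) (lsquare l).

Definition is_ls (P : pset) (l : R) : Prop :=
  0 <= l /\ fits P l /\ forall l', 0 <= l' -> fits P l' -> l <= l'.

Definition minimal (P : pset) (h : R) : Prop :=
  is_ls P h /\
  forall P', lattice_polygon P' -> proper_subset P' P -> ~ is_ls P' h.

Definition lattice_equiv (P P' : pset) : Prop :=
  exists f, unimodular f /\ forall q, image f P q <-> P' q.

Definition quad (h a b c d : Z) : pset :=
  conv ((a, 0%Z) :: (0%Z, b) :: (h, (h - c)%Z) :: ((h - d)%Z, h) :: nil).

Definition in_range (h x : Z) : Prop := (1 <= x <= h - 1)%Z.

Definition cond1 (h a b c d : Z) : Prop := (Z.min a b + Z.min c d > h)%Z.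
Definition cond2 (h a b c d : Z) : Prop := (Z.max a c + Z.max b d < h)%Z.

From Stdlib Require Import Reals ZArith List Lra Lia Psatz
  Classical ClassicalEpsilon FunctionalExtensionality PropExtensionality.
Open Scope R_scope.

(* Write A = (a,0), B = (0,b), C = (h,h-c), T = (h-d,h) for the corners of Q, which lies in
   [0,h]^2. If an affine unimodular map put Q into a square of side l < h, every row (p,q) of
   its linear part would have width at most h - 1 along C - B = (h, h-b-c) and
   T - A = (h-a-d, h); this forces p = q or p = -q, and two such rows never have determinant
   +-1. Hence ls(Q) = h.

   The reflections in the two diagonals of [0,h]^2 and the half-turn about its centre permute
   the corners of Q, map Q to a quadrilateral of the same family, and preserve both conditions.

   If a condition holds, a proper lattice subpolygon P of Q misses a corner, which after a
   symmetry is A. The lattice points of P then have y >= 1, and the shear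
   (x,y) |-> (x+y-min(a,b), y-1), resp. (x-y+max(b,d), y-1), maps P into (h-1)[0,1]^2.

   If neither condition holds, after a symmetry the corner T can be lowered to (h-d, h-1)
   without decreasing ls: the row argument now also allows the rows (0,+-1), so a unimodular
   pair of rows must contain a row (+-1,+-1), which is excluded because the cut polygon still
   has width at least h in the directions x + y and x - y.

   Finally, the reflection x |-> h - x maps Q to the quadrilateral with parameters
   (h-a, h-c, h-b, h-d) and exchanges the two (incompatible) conditions. *)

Lemma rsum_ext (f g : nat -> R) n :
  (forall i, (i < n)%nat -> f i = g i) -> rsum f n = rsum g n.
Proof.
  induction n as [|n IH]; intros Hfg; simpl; [reflexivity|].
  rewrite IH by (intros i Hi; apply Hfg; lia).
  rewrite Hfg by lia; reflexivity.
Qed.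

Lemma rsum_plus f g n : rsum (fun i => f i + g i) n = rsum f n + rsum g n.
Proof. induction n as [|n IH]; simpl; [lra | rewrite IH; lra]. Qed.

Lemma rsum_scal c f n : rsum (fun i => c * f i) n = c * rsum f n.
Proof. induction n as [|n IH]; simpl; [lra | rewrite IH; lra]. Qed.

Lemma rsum_le f g n :
  (forall i, (i < n)%nat -> f i <= g i) -> rsum f n <= rsum g n.
Proof.
  induction n as [|n IH]; intros Hfg; simpl; [lra|].
  assert (rsum f n <= rsum g n) by (apply IH; intros i Hi; apply Hfg; lia).
  assert (f n <= g n) by (apply Hfg; lia).
  lra.
Qed.

Lemma rsum_nonneg f n : (forall i, (i < n)%nat -> 0 <= f i) -> 0 <= rsum f n.
Proof.
  induction n as [|n IH]; intros Hf; simpl; [lra|].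
  assert (0 <= rsum f n) by (apply IH; intros i Hi; apply Hf; lia).
  assert (0 <= f n) by (apply Hf; lia).
  lra.
Qed.

Lemma rsum_exchange (F : nat -> nat -> R) m n :
  rsum (fun j => rsum (fun i => F i j) n) m = rsum (fun i => rsum (fun j => F i j) m) n.
Proof.
  induction m as [|m IH]; simpl.
  - induction n as [|n IHn]; simpl; lra.
  - rewrite IH, <- rsum_plus. reflexivity.
Qed.

Lemma rsum_compose (w : nat -> R) (mu : nat -> nat -> R) (g G : nat -> R) m n :
  (forall i, (i < m)%nat -> G i = rsum (fun j => mu i j * g j) n) ->
  rsum (fun i => w i * G i) m = rsum (fun j => rsum (fun i => w i * mu i j) m * g j) n.
Proof.
  intros HG.
  rewrite (rsum_ext _ (fun i => rsum (fun j => w i * mu i j * g j) n)).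
  - rewrite <- (rsum_exchange (fun i j => w i * mu i j * g j)).
    apply rsum_ext; intros j _.
    rewrite <- (Rmult_comm (g j)), <- rsum_scal.
    apply rsum_ext; intros; ring.
  - intros i Hi. rewrite HG, <- rsum_scal by exact Hi.
    apply rsum_ext; intros; ring.
Qed.

Lemma rsum_delta k n g :
  (k < n)%nat -> rsum (fun i => (if Nat.eqb i k then 1 else 0) * g i) n = g k.
Proof.
  induction n as [|n IH]; intros Hk; [lia|]. simpl.
  destruct (Nat.eqb n k) eqn:E.
  - apply Nat.eqb_eq in E; subst.
    rewrite (rsum_ext _ (fun _ => 0)).
    + clear. induction k as [|k IH]; simpl; lra.
    + intros i Hi. destruct (Nat.eqb_spec i k); [lia | ring].
  - apply Nat.eqb_neq in E. rewrite IH by lia. lra.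
Qed.

(** * Convex hulls of lattice points *)

Definition vertex (vs : list (Z * Z)) (i : nat) : pt := lat (nth i vs (0%Z, 0%Z)).

Definition weights (w : nat -> R) (n : nat) : Prop :=
  (forall i, (i < n)%nat -> 0 <= w i) /\ rsum w n = 1.

Definition bary (w : nat -> R) (vs : list (Z * Z)) : pt :=
  (rsum (fun i => w i * fst (vertex vs i)) (length vs),
   rsum (fun i => w i * snd (vertex vs i)) (length vs)).

Lemma conv_bary vs p : conv vs p <-> exists w, weights w (length vs) /\ p = bary w vs.
Proof.
  destruct p as [x y]; unfold conv, weights, bary, vertex; simpl. split.
  - intros (w & Hw0 & Hw1 & -> & ->). exists w. auto.
  - intros (w & [Hw0 Hw1] & E). injection E as -> ->. exists w. auto.
Qed.

Definition affine_form (al be ga : R) (p : pt) : R := al * fst p + be * snd p + ga.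

Lemma affine_form_bary al be ga w vs :
  rsum w (length vs) = 1 ->
  affine_form al be ga (bary w vs) =
  rsum (fun i => w i * affine_form al be ga (vertex vs i)) (length vs).
Proof.
  intros Hw. unfold affine_form, bary; cbn [fst snd].
  rewrite (rsum_ext (fun i => w i * (al * fst (vertex vs i) + be * snd (vertex vs i) + ga))
                    (fun i => (al * (w i * fst (vertex vs i)) +
                                 be * (w i * snd (vertex vs i))) + ga * w i))
    by (intros; ring).
  rewrite !rsum_plus, !rsum_scal, Hw. ring.
Qed.

Lemma conv_affine_bound vs p al be ga lo hi :
  conv vs p ->
  (forall i, (i < length vs)%nat -> lo <= affine_form al be ga (vertex vs i) <= hi) ->
  lo <= affine_form al be ga p <= hi.
Proof.
  intros Hp Hb. apply conv_bary in Hp as (w & [Hw0 Hw1] & ->).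
  rewrite affine_form_bary by exact Hw1.
  split.
  - replace lo with (rsum (fun i => lo * w i) (length vs)) by (rewrite rsum_scal, Hw1; ring).
    apply rsum_le; intros i Hi. specialize (Hb i Hi). specialize (Hw0 i Hi). nra.
  - replace hi with (rsum (fun i => hi * w i) (length vs)) by (rewrite rsum_scal, Hw1; ring).
    apply rsum_le; intros i Hi. specialize (Hb i Hi). specialize (Hw0 i Hi). nra.
Qed.

Lemma conv_vertex vs k : (k < length vs)%nat -> conv vs (vertex vs k).
Proof.
  intros Hk. apply conv_bary. exists (fun i => if Nat.eqb i k then 1 else 0).
  split; [split|].
  - intros i _. destruct (Nat.eqb i k); lra.
  - rewrite (rsum_ext _ (fun i => (if Nat.eqb i k then 1 else 0) * 1)) by (intros; ring).
    apply rsum_delta, Hk.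
  - unfold bary. rewrite !rsum_delta by exact Hk. destruct (vertex vs k); reflexivity.
Qed.

Lemma conv_incl vs ws p :
  (forall i, (i < length vs)%nat -> conv ws (vertex vs i)) -> conv vs p -> conv ws p.
Proof.
  intros Hvs Hp.
  destruct (choice (fun i mu => (i < length vs)%nat ->
                     weights mu (length ws) /\ vertex vs i = bary mu ws)) as [mu Hmu].
  { intros i. destruct (lt_dec i (length vs)) as [Hi|Hi].
    - destruct (proj1 (conv_bary _ _) (Hvs i Hi)) as [mu Hmu]. exists mu. auto.
    - exists (fun _ => 0). intros; lia. }
  apply conv_bary in Hp as (w & [Hw0 Hw1] & ->).
  apply conv_bary. exists (fun j => rsum (fun i => w i * mu i j) (length vs)).
  split; [split|].
  - intros j Hj. apply rsum_nonneg. intros i Hi.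
    apply Rmult_le_pos; [apply Hw0, Hi | apply (Hmu i Hi), Hj].
  - transitivity (rsum (fun i => w i * 1) (length vs)).
    + rewrite (rsum_compose w mu (fun _ => 1) (fun _ => 1) (length vs) (length ws)).
      * apply rsum_ext; intros; ring.
      * intros i Hi. rewrite (rsum_ext _ (mu i)) by (intros; ring).
        symmetry; apply Hmu, Hi.
    + rewrite (rsum_ext _ w) by (intros; ring). exact Hw1.
  - unfold bary. f_equal; apply rsum_compose; intros i Hi; rewrite (proj2 (Hmu i Hi));
      reflexivity.
Qed.

(** * Affine unimodular maps *)

Definition affZ (f : aff) (z : Z * Z) : Z * Z :=
  (m11 f * fst z + m12 f * snd z + t1 f, m21 f * fst z + m22 f * snd z + t2 f)%Z.

Lemma aff_apply_lat f z : aff_apply f (lat z) = lat (affZ f z).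
Proof. unfold lat, affZ, aff_apply; simpl. rewrite !plus_IZR, !mult_IZR. reflexivity. Qed.

Lemma vertex_map f vs i :
  (i < length vs)%nat -> vertex (map (affZ f) vs) i = aff_apply f (vertex vs i).
Proof.
  intros Hi. unfold vertex.
  rewrite (nth_indep _ _ (affZ f (0%Z, 0%Z))) by (rewrite length_map; exact Hi).
  rewrite map_nth. symmetry; apply aff_apply_lat.
Qed.

Lemma aff_apply_bary f w vs :
  rsum w (length vs) = 1 -> aff_apply f (bary w vs) = bary w (map (affZ f) vs).
Proof.
  intros Hw. unfold bary at 2. rewrite length_map.
  rewrite (rsum_ext (fun i => w i * fst (vertex (map (affZ f) vs) i))
                    (fun i => w i * affine_form (IZR (m11 f)) (IZR (m12 f)) (IZR (t1 f))
                                                (vertex vs i)))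
    by (intros i Hi; rewrite vertex_map by exact Hi; reflexivity).
  rewrite (rsum_ext (fun i => w i * snd (vertex (map (affZ f) vs) i))
                    (fun i => w i * affine_form (IZR (m21 f)) (IZR (m22 f)) (IZR (t2 f))
                                                (vertex vs i)))
    by (intros i Hi; rewrite vertex_map by exact Hi; reflexivity).
  rewrite <- !affine_form_bary by exact Hw. reflexivity.
Qed.

Lemma conv_image f vs : image f (conv vs) = conv (map (affZ f) vs).
Proof.
  apply functional_extensionality; intros q; apply propositional_extensionality.
  split.
  - intros (p & Hp & ->). apply conv_bary in Hp as (w & Hw & ->).
    apply conv_bary. exists w. rewrite length_map.
    split; [exact Hw | apply aff_apply_bary, Hw].
  - intros Hq. apply conv_bary in Hq as (w & Hw & ->). rewrite length_map in Hw.
    exists (bary w vs). split.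
    + apply conv_bary. exists w. auto.
    + symmetry; apply aff_apply_bary, Hw.
Qed.

Lemma lattice_polygon_conv P : lattice_polygon P -> exists vs, P = conv vs.
Proof.
  intros (vs & _ & HP). exists vs.
  apply functional_extensionality; intros p; apply propositional_extensionality, HP.
Qed.

Lemma lattice_polygon_image f P : lattice_polygon P -> lattice_polygon (image f P).
Proof.
  intros (vs & Hne & HP). exists (map (affZ f) vs). split.
  - destruct vs; [contradiction | discriminate].
  - rewrite <- conv_image. intros q. unfold image. split.
    + intros (p & Hp & ->). exists p. rewrite <- HP. auto.
    + intros (p & Hp & ->). exists p. rewrite HP. auto.
Qed.

Lemma conv_boundZ vs p (al be ga lo hi : Z) :
  conv vs p ->
  (forall i, (i < length vs)%nat ->
     let z := nth i vs (0%Z, 0%Z) in (lo <= al * fst z + be * snd z + ga <= hi)%Z) ->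
  IZR lo <= IZR al * fst p + IZR be * snd p + IZR ga <= IZR hi.
Proof.
  intros Hp Hb. apply (conv_affine_bound vs p _ _ _ _ _ Hp).
  intros i Hi. specialize (Hb i Hi). cbv zeta in Hb.
  unfold affine_form, vertex, lat; cbn [fst snd].
  rewrite <- !mult_IZR, <- !plus_IZR. split; apply IZR_le; lia.
Qed.

Lemma conv_lattice_boundZ vs z (al be ga lo hi : Z) :
  conv vs (lat z) ->
  (forall i, (i < length vs)%nat ->
     let v := nth i vs (0%Z, 0%Z) in (lo <= al * fst v + be * snd v + ga <= hi)%Z) ->
  (lo <= al * fst z + be * snd z + ga <= hi)%Z.
Proof.
  intros Hz Hb. destruct (conv_boundZ vs _ al be ga lo hi Hz Hb) as [Hlo Hhi].
  unfold lat in Hlo, Hhi; cbn [fst snd] in Hlo, Hhi.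
  rewrite <- !mult_IZR, <- !plus_IZR in Hlo, Hhi.
  apply le_IZR in Hlo; apply le_IZR in Hhi. lia.
Qed.

Definition in_boxZ (L : Z) (z : Z * Z) : Prop := (0 <= fst z <= L /\ 0 <= snd z <= L)%Z.

Lemma fits_conv f vs L :
  unimodular f ->
  (forall i, (i < length vs)%nat -> in_boxZ L (affZ f (nth i vs (0%Z, 0%Z)))) ->
  fits (conv vs) (IZR L).
Proof.
  intros Hf Hb. exists f. split; [exact Hf|].
  intros q (p & Hp & ->). unfold lsquare, aff_apply; cbn [fst snd].
  split; apply (conv_boundZ vs p); auto; intros i Hi; destruct (Hb i Hi); auto.
Qed.

Lemma fits_subset P P' l : subset P P' -> fits P' l -> fits P l.
Proof.
  intros HP (f & Hf & Hsub). exists f. split; [exact Hf|].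
  intros q (p & Hp & ->). apply Hsub. exists p. auto.
Qed.

Definition aff_id : aff := Aff 1 0 0 1 0 0.

Definition aff_comp (f g : aff) : aff :=
  Aff (m11 f * m11 g + m12 f * m21 g) (m11 f * m12 g + m12 f * m22 g)
      (m21 f * m11 g + m22 f * m21 g) (m21 f * m12 g + m22 f * m22 g)
      (m11 f * t1 g + m12 f * t2 g + t1 f) (m21 f * t1 g + m22 f * t2 g + t2 f).

Lemma aff_apply_comp f g p : aff_apply (aff_comp f g) p = aff_apply f (aff_apply g p).
Proof.
  destruct p; unfold aff_apply, aff_comp; simpl.
  rewrite !plus_IZR, !mult_IZR. f_equal; ring.
Qed.

Lemma unimodular_comp f g : unimodular f -> unimodular g -> unimodular (aff_comp f g).
Proof.
  unfold unimodular, aff_comp; simpl.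
  replace ((m11 f * m11 g + m12 f * m21 g) * (m21 f * m12 g + m22 f * m22 g) -
           (m11 f * m12 g + m12 f * m22 g) * (m21 f * m11 g + m22 f * m21 g))%Z
    with ((m11 f * m22 f - m12 f * m21 f) * (m11 g * m22 g - m12 g * m21 g))%Z by ring.
  intros [-> | ->] [-> | ->]; auto.
Qed.

Definition lattice_involution (s : aff) : Prop :=
  unimodular s /\ forall p, aff_apply s (aff_apply s p) = p.

Lemma image_subset f P P' : subset P P' -> subset (image f P) (image f P').
Proof. intros H q (p & Hp & ->). exists p. auto. Qed.

Lemma image_involutive s P : lattice_involution s -> image s (image s P) = P.
Proof.
  intros [_ Hs]. apply functional_extensionality; intros q; apply propositional_extensionality.
  split.
  - intros (p & (r & Hr & ->) & ->). rewrite Hs. exact Hr.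
  - intros Hq. exists (aff_apply s q). split; [exists q; auto | rewrite Hs; reflexivity].
Qed.

Lemma image_eq_of_involution s P P' :
  lattice_involution s ->
  (forall p, P p -> P' (aff_apply s p)) -> (forall p, P' p -> P (aff_apply s p)) ->
  image s P = P'.
Proof.
  intros Hs HPP' HP'P.
  apply functional_extensionality; intros q; apply propositional_extensionality.
  split.
  - intros (p & Hp & ->). auto.
  - intros Hq. exists (aff_apply s q). split; [auto | symmetry; apply Hs].
Qed.

Lemma fits_of_image f P l : unimodular f -> fits (image f P) l -> fits P l.
Proof.
  intros Hf (g & Hg & Hsub). exists (aff_comp g f). split; [apply unimodular_comp; auto|].
  intros q (p & Hp & ->). rewrite aff_apply_comp. apply Hsub.
  exists (aff_apply f p). split; [exists p; auto | reflexivity].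
Qed.

Lemma fits_image s P l : lattice_involution s -> fits P l -> fits (image s P) l.
Proof.
  intros Hs Hf. apply (fits_of_image s); [apply Hs|]. rewrite image_involutive; auto.
Qed.

Lemma is_ls_image s P l : lattice_involution s -> is_ls P l -> is_ls (image s P) l.
Proof.
  intros Hs (Hl & Hf & Hmin). split; [exact Hl|]. split; [apply fits_image; auto|].
  intros l' Hl' Hf'. apply Hmin; [exact Hl'|]. apply (fits_of_image s); [apply Hs | exact Hf'].
Qed.

Lemma minimal_image s P h : lattice_involution s -> minimal P h -> minimal (image s P) h.
Proof.
  intros Hs (Hls & Hmin). split; [apply is_ls_image; auto|].
  intros P' HP' (Hsub & q & Hq & Hnq) Hls'.
  apply (Hmin (image s P')).
  - apply lattice_polygon_image, HP'.
  - split.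
    + rewrite <- (image_involutive s P) by exact Hs. apply image_subset, Hsub.
    + destruct Hq as (p & Hp & ->). exists p. split; [exact Hp|].
      intros (r & Hr & E). apply Hnq. rewrite E, (proj2 Hs). exact Hr.
  - apply is_ls_image; auto.
Qed.

(** * A lower bound for the lattice size *)

Definition lattice_width_le (P : pset) (p q n : Z) : Prop :=
  forall z1 z2, P (lat z1) -> P (lat z2) ->
    (p * (fst z1 - fst z2) + q * (snd z1 - snd z2) <= n)%Z.

Lemma lattice_width_le_opp P p q n :
  lattice_width_le P p q n -> lattice_width_le P (- p) (- q) n.
Proof. intros W z1 z2 H1 H2. specialize (W z2 z1 H2 H1). lia. Qed.

Lemma fits_lattice_width f P l h :
  subset (image f P) (lsquare l) -> l < IZR h ->
  lattice_width_le P (m11 f) (m12 f) (h - 1) /\ lattice_width_le P (m21 f) (m22 f) (h - 1).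
Proof.
  intros Hsub Hl.
  assert (Hbox : forall z, P (lat z) -> lsquare l (lat (affZ f z))).
  { intros z Hz. rewrite <- aff_apply_lat. apply Hsub. exists (lat z). auto. }
  assert (Hdiff : forall x1 x2 : Z, 0 <= IZR x1 <= l -> 0 <= IZR x2 <= l -> (x1 - x2 <= h - 1)%Z).
  { intros x1 x2 H1 H2. assert (IZR (x1 - x2) < IZR h) by (rewrite minus_IZR; lra).
    apply lt_IZR in H. lia. }
  split; intros z1 z2 H1 H2;
    destruct (Hbox z1 H1) as [X1 Y1]; destruct (Hbox z2 H2) as [X2 Y2];
    unfold affZ, lat in X1, Y1, X2, Y2; cbn [fst snd] in X1, Y1, X2, Y2.
  - specialize (Hdiff _ _ X1 X2). lia.
  - specialize (Hdiff _ _ Y1 Y2). lia.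
Qed.

Lemma ls_ge_of_no_narrow_basis P h l :
  (forall f, unimodular f ->
     ~ (lattice_width_le P (m11 f) (m12 f) (h - 1) /\
        lattice_width_le P (m21 f) (m22 f) (h - 1))) ->
  fits P l -> IZR h <= l.
Proof.
  intros Hwide (f & Hf & Hsub). destruct (Rle_or_lt (IZR h) l) as [Hle|Hlt]; [exact Hle|].
  exfalso. apply (Hwide f Hf). apply (fits_lattice_width f P l); auto.
Qed.

Definition narrow_direction (e p q : Z) : Prop :=
  ((p = q \/ p = - q) \/ (e = 1 /\ p = 0 /\ (q = 1 \/ q = -1)))%Z.

Lemma narrow_direction_of_bounds (h u v e p q : Z) :
  (2 <= h)%Z -> (Z.abs u <= h - 2)%Z -> (Z.abs v <= h - 2)%Z -> (0 <= e <= 1)%Z ->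
  (Z.abs (p * h + q * u) <= h - 1)%Z -> (Z.abs (p * v + q * (h - e)) <= h - 1)%Z ->
  narrow_direction e p q.
Proof.
  unfold narrow_direction. intros Hh Hu Hv He H1 H2.
  apply Z.abs_le in Hu, Hv, H1, H2.
  destruct (Z.lt_total (Z.abs p) (Z.abs q)) as [Hl|[Hl|Hl]].
  - destruct (Z.eq_dec e 1); [destruct (Z.eq_dec p 0)|].
    + right. subst. split; auto. split; auto. destruct (Z_le_gt_dec 0 q); nia.
    + exfalso. destruct (Z_le_gt_dec 0 p), (Z_le_gt_dec 0 q); nia.
    + exfalso. assert (e = 0)%Z by lia. subst. destruct (Z_le_gt_dec 0 p), (Z_le_gt_dec 0 q); nia.
  - left. lia.
  - exfalso. destruct (Z_le_gt_dec 0 p), (Z_le_gt_dec 0 q); nia.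
Qed.

Lemma unimodular_narrow_rows e p1 q1 p2 q2 :
  (p1 * q2 - q1 * p2 = 1 \/ p1 * q2 - q1 * p2 = -1)%Z ->
  narrow_direction e p1 q1 -> narrow_direction e p2 q2 ->
  e = 1%Z /\ ((Z.abs p1 = 1 /\ Z.abs q1 = 1) \/ (Z.abs p2 = 1 /\ Z.abs q2 = 1))%Z.
Proof.
  unfold narrow_direction.
  intros Hdet [[-> | ->] | (He & -> & Hq1)] [[-> | ->] | (He' & -> & Hq2)].
  all: try (exfalso; destruct Hdet as [Hdet|Hdet]; ring_simplify in Hdet; lia).
  all: split; [assumption|]; destruct Hdet as [Hdet|Hdet]; ring_simplify in Hdet; nia.
Qed.

Definition quad_params (h a b c d : Z) : Prop :=
  in_range h a /\ in_range h b /\ in_range h c /\ in_range h d.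

Lemma ls_ge_of_corners P h a b c d e l :
  quad_params h a b c d -> (0 <= e <= 1)%Z ->
  P (lat (a, 0%Z)) -> P (lat (0%Z, b)) -> P (lat (h, h - c)%Z) -> P (lat (h - d, h - e)%Z) ->
  (e = 1%Z -> ~ lattice_width_le P 1 1 (h - 1) /\ ~ lattice_width_le P 1 (-1) (h - 1)) ->
  fits P l -> IZR h <= l.
Proof.
  unfold quad_params, in_range. intros Hp He HA HB HC HT Hdiag.
  apply ls_ge_of_no_narrow_basis. intros f Hf [W1 W2].
  assert (Hrow : forall p q, lattice_width_le P p q (h - 1) -> narrow_direction e p q).
  { intros p q W.
    pose proof (W _ _ HC HB). pose proof (W _ _ HB HC).
    pose proof (W _ _ HT HA). pose proof (W _ _ HA HT). cbn [fst snd] in *.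
    apply (narrow_direction_of_bounds h (h - c - b) (h - d - a) e); try lia;
      apply Z.abs_le; lia. }
  destruct (unimodular_narrow_rows e _ _ _ _ Hf (Hrow _ _ W1) (Hrow _ _ W2)) as [He1 Hunit].
  destruct (Hdiag He1) as [N1 N2].
  assert (Hdiag_narrow : forall p q, Z.abs p = 1%Z -> Z.abs q = 1%Z ->
                           ~ lattice_width_le P p q (h - 1)).
  { intros p q Hp1 Hq1 W.
    assert (Ep : (p = 1 \/ p = -1)%Z) by lia. assert (Eq : (q = 1 \/ q = -1)%Z) by lia.
    destruct Ep as [-> | ->], Eq as [-> | ->];
      [exact (N1 W) | exact (N2 W)
      | exact (N2 (lattice_width_le_opp _ _ _ _ W))
      | exact (N1 (lattice_width_le_opp _ _ _ _ W))]. }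
  destruct Hunit as [[Hp1 Hq1] | [Hp1 Hq1]];
    [exact (Hdiag_narrow _ _ Hp1 Hq1 W1) | exact (Hdiag_narrow _ _ Hp1 Hq1 W2)].
Qed.

Lemma conv4_iff (x0 y0 x1 y1 x2 y2 x3 y3 : Z) p :
  conv ((x0, y0) :: (x1, y1) :: (x2, y2) :: (x3, y3) :: nil) p <->
  exists w0 w1 w2 w3, 0 <= w0 /\ 0 <= w1 /\ 0 <= w2 /\ 0 <= w3 /\ w0 + w1 + w2 + w3 = 1 /\
    fst p = w0 * IZR x0 + w1 * IZR x1 + w2 * IZR x2 + w3 * IZR x3 /\
    snd p = w0 * IZR y0 + w1 * IZR y1 + w2 * IZR y2 + w3 * IZR y3.
Proof.
  unfold conv; simpl. split.
  - intros (w & Hw0 & Hw1 & Hx & Hy). exists (w 0%nat), (w 1%nat), (w 2%nat), (w 3%nat).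
    repeat split; try (apply Hw0; lia); lra.
  - intros (w0 & w1 & w2 & w3 & H0 & H1 & H2 & H3 & Hw & Hx & Hy).
    exists (fun i => match i with 0 => w0 | 1 => w1 | 2 => w2 | _ => w3 end)%nat.
    simpl. repeat split; try lra. intros [|[|[|i]]] _; assumption.
Qed.

Lemma quad_iff h a b c d p : quad h a b c d p <->
  exists w0 w1 w2 w3, 0 <= w0 /\ 0 <= w1 /\ 0 <= w2 /\ 0 <= w3 /\ w0 + w1 + w2 + w3 = 1 /\
    fst p = w0 * IZR a + w2 * IZR h + w3 * (IZR h - IZR d) /\
    snd p = w1 * IZR b + w2 * (IZR h - IZR c) + w3 * IZR h.
Proof.
  unfold quad. rewrite conv4_iff, !minus_IZR.
  split; intros (w0 & w1 & w2 & w3 & H); exists w0, w1, w2, w3; lra.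
Qed.

Definition quad_vertices (h a b c d : Z) : list (Z * Z) :=
  (a, 0%Z) :: (0%Z, b) :: (h, (h - c)%Z) :: ((h - d)%Z, h) :: nil.

Lemma quad_corners h a b c d :
  quad h a b c d (lat (a, 0%Z)) /\ quad h a b c d (lat (0%Z, b)) /\
  quad h a b c d (lat (h, h - c)%Z) /\ quad h a b c d (lat (h - d, h)%Z).
Proof.
  set (vs := quad_vertices h a b c d).
  split; [|split; [|split]];
    [apply (conv_vertex vs 0) | apply (conv_vertex vs 1)
    | apply (conv_vertex vs 2) | apply (conv_vertex vs 3)]; simpl; lia.
Qed.

Lemma quad_lattice_bounds h a b c d z :
  quad_params h a b c d -> quad h a b c d (lat z) ->
  (0 <= fst z <= h /\ 0 <= snd z <= h /\
   Z.min a b <= fst z + snd z <= 2 * h - Z.min c d /\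
   - Z.max b d <= fst z - snd z <= Z.max a c)%Z.
Proof.
  unfold quad_params, in_range. intros Hp Hz.
  assert (Hb : forall al be lo hi,
    (lo <= al * a <= hi)%Z -> (lo <= be * b <= hi)%Z ->
    (lo <= al * h + be * (h - c) <= hi)%Z -> (lo <= al * (h - d) + be * h <= hi)%Z ->
    (lo <= al * fst z + be * snd z <= hi)%Z).
  { intros al be lo hi H1 H2 H3 H4.
    pose proof (conv_lattice_boundZ _ z al be 0 lo hi Hz) as K.
    rewrite Z.add_0_r in K. apply K.
    intros [|[|[|[|i]]]] Hi; cbn [nth fst snd length] in Hi |- *; lia. }
  pose proof (Hb 1 0 0 h ltac:(lia) ltac:(lia) ltac:(lia) ltac:(lia))%Z.
  pose proof (Hb 0 1 0 h ltac:(lia) ltac:(lia) ltac:(lia) ltac:(lia))%Z.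
  pose proof (Hb 1 1 (Z.min a b) (2 * h - Z.min c d) ltac:(lia) ltac:(lia) ltac:(lia) ltac:(lia))%Z.
  pose proof (Hb 1 (-1) (- Z.max b d) (Z.max a c) ltac:(lia) ltac:(lia) ltac:(lia) ltac:(lia))%Z.
  lia.
Qed.

Lemma quad_fits h a b c d : quad_params h a b c d -> fits (quad h a b c d) (IZR h).
Proof.
  unfold quad_params, in_range. intros Hp.
  apply (fits_conv aff_id); [left; reflexivity|].
  intros [|[|[|[|i]]]] Hi; cbn [length nth] in Hi |- *; try lia;
    unfold in_boxZ, affZ, aff_id; cbn [fst snd m11 m12 m21 m22 t1 t2]; lia.
Qed.

Lemma quad_ls h a b c d : quad_params h a b c d -> is_ls (quad h a b c d) (IZR h).
Proof.
  intros Hp. destruct (quad_corners h a b c d) as (HA & HB & HC & HT).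
  split; [apply IZR_le; unfold quad_params, in_range in Hp; lia|].
  split; [apply quad_fits, Hp|].
  intros l _. apply (ls_ge_of_corners _ h a b c d 0); auto; [lia | | discriminate].
  rewrite Z.sub_0_r. exact HT.
Qed.

Lemma quad_lattice_snd_pos h a b c d z :
  quad_params h a b c d -> quad h a b c d (lat z) -> z <> (a, 0%Z) -> (1 <= snd z)%Z.
Proof.
  unfold quad_params, in_range. intros Hp Hz Hne.
  destruct (Z_le_gt_dec 1 (snd z)) as [Hpos|Hle]; [exact Hpos|]. exfalso. apply Hne.
  apply quad_iff in Hz as (w0 & w1 & w2 & w3 & H0 & H1 & H2 & H3 & Hw & Hx & Hy).
  unfold lat in Hx, Hy; cbn [fst snd] in Hx, Hy.
  assert (IZR (snd z) <= 0) by (apply IZR_le; lia).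
  assert (1 <= IZR b) by (apply IZR_le; lia).
  assert (1 <= IZR h - IZR c) by (rewrite <- minus_IZR; apply IZR_le; lia).
  assert (1 <= IZR h) by (apply IZR_le; lia).
  assert (w1 = 0) by nra. assert (w2 = 0) by nra. assert (w3 = 0) by nra. subst.
  destruct z as [x y]; cbn [fst snd] in *. f_equal; apply eq_IZR; nra.
Qed.

Lemma fits_sub_quad_missing_corner_A h a b c d P :
  quad_params h a b c d -> cond1 h a b c d \/ cond2 h a b c d ->
  lattice_polygon P -> subset P (quad h a b c d) -> ~ P (lat (a, 0%Z)) ->
  fits P (IZR (h - 1)).
Proof.
  intros Hp Hcond HP Hsub HA.
  destruct (lattice_polygon_conv P HP) as [vs ->].
  assert (Hv : forall i, (i < length vs)%nat ->
    let z := nth i vs (0%Z, 0%Z) in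
    (0 <= fst z <= h /\ 0 <= snd z <= h /\
     Z.min a b <= fst z + snd z <= 2 * h - Z.min c d /\
     - Z.max b d <= fst z - snd z <= Z.max a c /\ 1 <= snd z)%Z).
  { intros i Hi z. pose proof (conv_vertex vs i Hi) as Hz.
    assert (Hq : quad h a b c d (lat z)) by exact (Hsub _ Hz).
    pose proof (quad_lattice_bounds h a b c d z Hp Hq).
    assert (1 <= snd z)%Z; [|tauto].
    apply (quad_lattice_snd_pos h a b c d z Hp Hq). intros E. apply HA. rewrite <- E. exact Hz. }
  unfold cond1, cond2 in Hcond. destruct Hcond as [Hc|Hc].
  - apply (fits_conv (Aff 1 1 0 1 (- Z.min a b) (-1))); [left; reflexivity|].
    intros i Hi. specialize (Hv i Hi). cbv zeta in Hv.
    unfold in_boxZ, affZ; cbn [fst snd m11 m12 m21 m22 t1 t2]. lia.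
  - apply (fits_conv (Aff 1 (-1) 0 1 (Z.max b d) (-1))); [left; reflexivity|].
    intros i Hi. specialize (Hv i Hi). cbv zeta in Hv.
    unfold in_boxZ, affZ; cbn [fst snd m11 m12 m21 m22 t1 t2]. lia.
Qed.

(** * Symmetries of the quadrilateral *)

Definition flip_diag : aff := Aff 0 1 1 0 0 0.
Definition flip_antidiag (h : Z) : aff := Aff 0 (-1) (-1) 0 h h.
Definition flip_center (h : Z) : aff := Aff (-1) 0 0 (-1) h h.
Definition flip_vertical (h : Z) : aff := Aff (-1) 0 0 1 h 0.

Ltac involution_tac :=
  split; [unfold unimodular; cbn; auto | intros [x y]; unfold aff_apply; cbn; f_equal; ring].

Lemma lattice_involution_flip_diag : lattice_involution flip_diag.
Proof. involution_tac. Qed.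
Lemma lattice_involution_flip_antidiag h : lattice_involution (flip_antidiag h).
Proof. involution_tac. Qed.
Lemma lattice_involution_flip_center h : lattice_involution (flip_center h).
Proof. involution_tac. Qed.
Lemma lattice_involution_flip_vertical h : lattice_involution (flip_vertical h).
Proof. involution_tac. Qed.

Ltac quad_map_tac Hx Hy :=
  unfold aff_apply, flip_diag, flip_antidiag, flip_center, flip_vertical;
  cbn [fst snd m11 m12 m21 m22 t1 t2]; rewrite ?minus_IZR;
  repeat split; try lra; rewrite Hx, Hy; nra.

Lemma quad_flip_diag h a b c d p :
  quad h a b c d p -> quad h b a d c (aff_apply flip_diag p).
Proof.
  rewrite !quad_iff. intros (w0 & w1 & w2 & w3 & H0 & H1 & H2 & H3 & Hw & Hx & Hy).
  exists w1, w0, w3, w2. quad_map_tac Hx Hy.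
Qed.

Lemma quad_flip_antidiag h a b c d p :
  quad h a b c d p -> quad h c d a b (aff_apply (flip_antidiag h) p).
Proof.
  rewrite !quad_iff. intros (w0 & w1 & w2 & w3 & H0 & H1 & H2 & H3 & Hw & Hx & Hy).
  exists w2, w3, w0, w1. quad_map_tac Hx Hy.
Qed.

Lemma quad_flip_center h a b c d p :
  quad h a b c d p -> quad h d c b a (aff_apply (flip_center h) p).
Proof.
  rewrite !quad_iff. intros (w0 & w1 & w2 & w3 & H0 & H1 & H2 & H3 & Hw & Hx & Hy).
  exists w3, w2, w1, w0. quad_map_tac Hx Hy.
Qed.

Lemma quad_flip_vertical h a b c d p :
  quad h a b c d p -> quad h (h - a) (h - c) (h - b) (h - d) (aff_apply (flip_vertical h) p).
Proof.
  rewrite !quad_iff. intros (w0 & w1 & w2 & w3 & H0 & H1 & H2 & H3 & Hw & Hx & Hy).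
  exists w0, w2, w1, w3. quad_map_tac Hx Hy.
Qed.

Lemma image_quad_flip_diag h a b c d : image flip_diag (quad h a b c d) = quad h b a d c.
Proof.
  apply image_eq_of_involution;
    [apply lattice_involution_flip_diag | apply quad_flip_diag | apply quad_flip_diag].
Qed.

Lemma image_quad_flip_antidiag h a b c d :
  image (flip_antidiag h) (quad h a b c d) = quad h c d a b.
Proof.
  apply image_eq_of_involution;
    [apply lattice_involution_flip_antidiag | apply quad_flip_antidiag | apply quad_flip_antidiag].
Qed.

Lemma image_quad_flip_center h a b c d :
  image (flip_center h) (quad h a b c d) = quad h d c b a.
Proof.
  apply image_eq_of_involution;
    [apply lattice_involution_flip_center | apply quad_flip_center | apply quad_flip_center].
Qed.

Lemma image_quad_flip_vertical h a b c d :
  image (flip_vertical h) (quad h a b c d) = quad h (h - a) (h - c) (h - b) (h - d).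
Proof.
  apply image_eq_of_involution;
    [apply lattice_involution_flip_vertical | apply quad_flip_vertical |].
  intros p Hp. pose proof (quad_flip_vertical _ _ _ _ _ _ Hp) as Hq.
  rewrite !Z.sub_sub_distr, !Z.sub_diag, !Z.add_0_l in Hq. exact Hq.
Qed.

Lemma quad_lattice_equiv_flip_vertical h a b c d :
  lattice_equiv (quad h a b c d) (quad h (h - a) (h - c) (h - b) (h - d)).
Proof.
  exists (flip_vertical h). split; [apply lattice_involution_flip_vertical|].
  rewrite image_quad_flip_vertical. tauto.
Qed.

(** * Minimality *)

Lemma not_image_lat s P v :
  lattice_involution s -> ~ P (lat v) -> ~ image s P (lat (affZ s v)).
Proof.
  intros Hs Hv (p & Hp & E). apply Hv.
  rewrite <- aff_apply_lat in E. apply (f_equal (aff_apply s)) in E.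
  rewrite !(proj2 Hs) in E. rewrite E. exact Hp.
Qed.

Lemma fits_sub_quad_missing_corner s h a b c d a' b' c' d' v P :
  lattice_involution s -> image s (quad h a b c d) = quad h a' b' c' d' ->
  affZ s v = (a', 0%Z) -> quad_params h a' b' c' d' ->
  cond1 h a' b' c' d' \/ cond2 h a' b' c' d' ->
  lattice_polygon P -> subset P (quad h a b c d) -> ~ P (lat v) ->
  fits P (IZR (h - 1)).
Proof.
  intros Hs Himg Hv Hp Hcond HP Hsub Hmiss.
  apply (fits_of_image s); [apply Hs|].
  apply (fits_sub_quad_missing_corner_A h a' b' c' d'); auto.
  - apply lattice_polygon_image, HP.
  - rewrite <- Himg. apply image_subset, Hsub.
  - rewrite <- Hv. apply not_image_lat; auto.
Qed.

Lemma quad_minimal_of_cond h a b c d :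
  quad_params h a b c d -> cond1 h a b c d \/ cond2 h a b c d ->
  minimal (quad h a b c d) (IZR h).
Proof.
  intros Hp Hcond. split; [apply quad_ls, Hp|].
  intros P HP (Hsub & p & Hp' & Hnp) Hls.
  assert (Hmiss : ~ P (lat (a, 0%Z)) \/ ~ P (lat (0%Z, b)) \/
                  ~ P (lat (h, h - c)%Z) \/ ~ P (lat (h - d, h)%Z)).
  { apply NNPP. intros Hall. apply Hnp.
    destruct (lattice_polygon_conv P HP) as [vs ->].
    apply (conv_incl (quad_vertices h a b c d)); [|exact Hp'].
    intros [|[|[|[|i]]]] Hi; cbn in Hi; try lia; apply NNPP; intros N; apply Hall; tauto. }
  assert (Hfit : fits P (IZR (h - 1))).
  { unfold quad_params in Hp. unfold cond1, cond2 in Hcond.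
    destruct Hmiss as [M | [M | [M | M]]].
    - apply (fits_sub_quad_missing_corner_A h a b c d); auto.
    - apply (fits_sub_quad_missing_corner flip_diag h a b c d b a d c (0%Z, b));
        auto using lattice_involution_flip_diag, image_quad_flip_diag.
      + unfold affZ, flip_diag; cbn [fst snd m11 m12 m21 m22 t1 t2]. f_equal; ring.
      + unfold quad_params; tauto.
      + unfold cond1, cond2; lia.
    - apply (fits_sub_quad_missing_corner (flip_antidiag h) h a b c d c d a b (h, h - c)%Z);
        auto using lattice_involution_flip_antidiag, image_quad_flip_antidiag.
      + unfold affZ, flip_antidiag; cbn [fst snd m11 m12 m21 m22 t1 t2]. f_equal; ring.
      + unfold quad_params; tauto.
      + unfold cond1, cond2; lia.
    - apply (fits_sub_quad_missing_corner (flip_center h) h a b c d d c b a (h - d, h)%Z);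
        auto using lattice_involution_flip_center, image_quad_flip_center.
      + unfold affZ, flip_center; cbn [fst snd m11 m12 m21 m22 t1 t2]. f_equal; ring.
      + unfold quad_params; tauto.
      + unfold cond1, cond2; lia. }
  destruct Hls as (_ & _ & Hmin).
  specialize (Hmin _ (IZR_le 0 (h - 1) ltac:(unfold quad_params, in_range in Hp; lia)) Hfit).
  apply le_IZR in Hmin. lia.
Qed.

Definition cut_vertices (h a b c d : Z) : list (Z * Z) :=
  (a, 0%Z) :: (0%Z, b) :: (h, (h - c)%Z) :: ((h - d)%Z, (h - 1)%Z) :: nil.

(* The ranges of x + y and of x - y over [cut_vertices] have length at least h. *)
Definition cut_wide (h a b c d : Z) : Prop :=
  (Z.max (2 * h - c) (2 * h - d - 1) - Z.min a b >= h /\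
   Z.max a c - Z.min (- b) (1 - d) >= h)%Z.

Lemma quad_contains_cut_corner h a b c d :
  quad_params h a b c d -> quad h a b c d (lat (h - d, h - 1)%Z).
Proof.
  unfold quad_params, in_range. intros Hp. apply quad_iff. unfold lat; cbn [fst snd].
  assert (HD : (0 <= h * (h - 1 - b) - (h - c - b) * (h - d))%Z) by nia.
  apply IZR_le in HD. rewrite !minus_IZR, !mult_IZR, !minus_IZR in HD. rewrite !minus_IZR.
  (* (h-d, h-1) lies between T and the point of BC below it, whose height is at most h - 1
     because D >= 0. *)
  set (D := IZR h * (IZR h - IZR 1 - IZR b) - (IZR h - IZR c - IZR b) * (IZR h - IZR d)) in HD.
  assert (0 <= IZR d) by (apply IZR_le; lia).
  assert (IZR d <= IZR h) by (apply IZR_le; lia).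
  assert (2 <= IZR h) by (apply IZR_le; lia).
  assert (Hpos : 0 < IZR h + D) by lra.
  exists 0, (IZR d / (IZR h + D)), ((IZR h - IZR d) / (IZR h + D)), (D / (IZR h + D)).
  assert (Hdiv : forall x, 0 <= x -> 0 <= x / (IZR h + D))
    by (intros x Hx; apply Rmult_le_pos; [exact Hx | left; apply Rinv_0_lt_compat, Hpos]).
  repeat split; try lra; try (apply Hdiv; lra); unfold D in *; field; apply Rgt_not_eq; lra.
Qed.

Lemma cut_subset_quad h a b c d :
  quad_params h a b c d -> subset (conv (cut_vertices h a b c d)) (quad h a b c d).
Proof.
  intros Hp p. apply conv_incl.
  destruct (quad_corners h a b c d) as (HA & HB & HC & _).
  intros [|[|[|[|i]]]] Hi; cbn in Hi; try lia; auto.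
  apply quad_contains_cut_corner, Hp.
Qed.

Lemma cut_proper_subset_quad h a b c d :
  quad_params h a b c d -> proper_subset (conv (cut_vertices h a b c d)) (quad h a b c d).
Proof.
  intros Hp. split; [apply cut_subset_quad, Hp|].
  destruct (quad_corners h a b c d) as (_ & _ & _ & HT).
  exists (lat (h - d, h)%Z). split; [exact HT|].
  intros Hcut. unfold quad_params, in_range in Hp.
  assert (Hy : (0 <= 0 * fst (h - d, h)%Z + 1 * snd (h - d, h)%Z + 0 <= h - 1)%Z).
  { apply (conv_lattice_boundZ _ _ 0 1 0 0 (h - 1) Hcut).
    unfold cut_vertices; intros [|[|[|[|i]]]] Hi; cbn [nth fst snd length] in Hi |- *; lia. }
  cbn [fst snd] in Hy. lia.
Qed.

Lemma cut_ls h a b c d :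
  quad_params h a b c d -> cut_wide h a b c d ->
  is_ls (conv (cut_vertices h a b c d)) (IZR h).
Proof.
  intros Hp Hw. set (vs := cut_vertices h a b c d).
  assert (HA : conv vs (lat (a, 0%Z))) by (apply (conv_vertex vs 0); cbn; lia).
  assert (HB : conv vs (lat (0%Z, b))) by (apply (conv_vertex vs 1); cbn; lia).
  assert (HC : conv vs (lat (h, h - c)%Z)) by (apply (conv_vertex vs 2); cbn; lia).
  assert (HT : conv vs (lat (h - d, h - 1)%Z)) by (apply (conv_vertex vs 3); cbn; lia).
  split; [apply IZR_le; unfold quad_params, in_range in Hp; lia|].
  split.
  { apply (fits_subset _ (quad h a b c d)); [apply cut_subset_quad | apply quad_fits]; exact Hp. }
  intros l _. apply (ls_ge_of_corners _ h a b c d 1); auto; [lia|].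
  unfold cut_wide in Hw. intros _. split; intros W.
  - pose proof (W _ _ HC HA). pose proof (W _ _ HC HB).
    pose proof (W _ _ HT HA). pose proof (W _ _ HT HB). cbn [fst snd] in *. lia.
  - pose proof (W _ _ HA HB). pose proof (W _ _ HA HT).
    pose proof (W _ _ HC HB). pose proof (W _ _ HC HT). cbn [fst snd] in *. lia.
Qed.

Lemma quad_not_minimal_of_cut_wide h a b c d :
  quad_params h a b c d -> cut_wide h a b c d -> ~ minimal (quad h a b c d) (IZR h).
Proof.
  intros Hp Hw (_ & Hmin). apply (Hmin (conv (cut_vertices h a b c d))).
  - exists (cut_vertices h a b c d). split; [discriminate | tauto].
  - apply cut_proper_subset_quad, Hp.
  - apply cut_ls; assumption.
Qed.

Lemma cut_wide_of_not_cond h a b c d :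
  quad_params h a b c d -> ~ cond1 h a b c d -> ~ cond2 h a b c d ->
  cut_wide h a b c d \/ cut_wide h b a d c \/ cut_wide h c d a b \/ cut_wide h d c b a.
Proof. unfold quad_params, in_range, cond1, cond2, cut_wide. lia. Qed.

Lemma quad_not_minimal h a b c d :
  quad_params h a b c d -> ~ cond1 h a b c d -> ~ cond2 h a b c d ->
  ~ minimal (quad h a b c d) (IZR h).
Proof.
  intros Hp N1 N2 Hmin.
  assert (Hperm : quad_params h b a d c /\ quad_params h c d a b /\ quad_params h d c b a)
    by (unfold quad_params in *; tauto).
  destruct Hperm as (Hp1 & Hp2 & Hp3).
  destruct (cut_wide_of_not_cond h a b c d Hp N1 N2) as [W | [W | [W | W]]].
  - exact (quad_not_minimal_of_cut_wide h a b c d Hp W Hmin).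
  - apply (quad_not_minimal_of_cut_wide h b a d c Hp1 W).
    rewrite <- image_quad_flip_diag.
    apply minimal_image; [apply lattice_involution_flip_diag | exact Hmin].
  - apply (quad_not_minimal_of_cut_wide h c d a b Hp2 W).
    rewrite <- image_quad_flip_antidiag.
    apply minimal_image; [apply lattice_involution_flip_antidiag | exact Hmin].
  - apply (quad_not_minimal_of_cut_wide h d c b a Hp3 W).
    rewrite <- image_quad_flip_center.
    apply minimal_image; [apply lattice_involution_flip_center | exact Hmin].
Qed.

Theorem mainTheorem7 (h a b c d : Z) :
  (2 <= h)%Z ->
  in_range h a -> in_range h b -> in_range h c -> in_range h d ->
  is_ls (quad h a b c d) (IZR h) /\
  (minimal (quad h a b c d) (IZR h) <-> (cond1 h a b c d \/ cond2 h a b c d)) /\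
  ~ (cond1 h a b c d /\ cond2 h a b c d) /\
  (cond1 h a b c d ->
     exists a' b' c' d', in_range h a' /\ in_range h b' /\ in_range h c' /\
       in_range h d' /\ lattice_equiv (quad h a b c d) (quad h a' b' c' d') /\
       cond2 h a' b' c' d') /\
  (cond2 h a b c d ->
     exists a' b' c' d', in_range h a' /\ in_range h b' /\ in_range h c' /\
       in_range h d' /\ lattice_equiv (quad h a b c d) (quad h a' b' c' d') /\
       cond1 h a' b' c' d').
Proof.
  intros _ Ha Hb Hc Hd.
  assert (Hp : quad_params h a b c d) by exact (conj Ha (conj Hb (conj Hc Hd))).
  split; [apply quad_ls, Hp|].
  split; [|split; [|split]].
  - split; [|apply quad_minimal_of_cond, Hp].
    intros Hmin. apply NNPP. intros Hnot. apply not_or_and in Hnot as [N1 N2].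
    exact (quad_not_minimal h a b c d Hp N1 N2 Hmin).
  - unfold in_range, cond1, cond2 in *. lia.
  - intros Hc1. exists (h - a)%Z, (h - c)%Z, (h - b)%Z, (h - d)%Z.
    pose proof (quad_lattice_equiv_flip_vertical h a b c d).
    unfold in_range, cond1, cond2 in *. repeat split; auto; lia.
  - intros Hc2. exists (h - a)%Z, (h - c)%Z, (h - b)%Z, (h - d)%Z.
    pose proof (quad_lattice_equiv_flip_vertical h a b c d).
    unfold in_range, cond1, cond2 in *. repeat split; auto; lia.
Qed.
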